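(* Let $X\colon\mathcal{I}\to\mathcal{T}op$ be an $\mathcal{I}$-space. For each finite group $G$ let $E_GX\colon\mathcal{I}_G\to\mathcal{T}op_G$ be the left Kan extension of $X$ (regarded as a functor with trivial $G$-actions) along $\iota\colon\mathcal{I}\to\mathcal{I}_G$. Then the functors $E_GX$ are the components of an $\mathcal{I}_\mathcal{G}$-space.
   Context: Let $\mathcal{G}$ be the category of finite groups. For finite $G$, $\mathcal{I}_G$ has objects $(\mathbb{R}^n,\rho)$ with $\rho\colon G\to O(n)$ a homomorphism and morphisms all linear isometric isomorphisms, with disjoint basepoint and conjugation $G$-action; $\mathcal{T}op_G$ is based $G$-spaces and all based maps with conjugation action. $\mathcal{I}=\mathcal{I}_e$ (objects $\mathbb{R}^n$), and $\iota\colon\mathcal{I}\to\mathcal{I}_G$ gives $\mathbb{R}^n$ the trivial action. Explicitly $E_GX(V)=\coprod_n\mathcal{I}_G(\mathbb{R}^n,V)\times X(\mathbb{R}^n)/\sim$, $[st,x]\sim[s,t_*x]$ for $t$ in $\mathcal{I}$, with diagonal $G$-action. An $\mathcal{I}_\mathcal{G}$-space $A$ consists of $G$-continuous functors $A_G\colon\mathcal{I}_G\to\mathcal{T}op_G$ (i.e. $A_G(gfg^{-1})=gA_G(f)g^{-1}$) for every finite $G$, with, for each homomorphism $\alpha\colon G\to H$, a natural isomorphism $\phi_\alpha\colon\alpha^*\circ A_H\Rightarrow A_G\circ\alpha^*$ with $G$-equivariant components (here $\alpha^*$ is restriction along $\alpha$ of representations and of group actions), such that $\phi_{\mathrm{id}}=\mathrm{id}$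 and the $\phi$'s are compatible with composition of homomorphisms. *)

From HB Require Import structures.
From mathcomp Require Import all_boot all_algebra all_fingroup.
From mathcomp Require Import generic_quotient.
From mathcomp Require Import boolp classical_sets reals topology.
From Stdlib Require Import Relations.Relation_Operators.
Set Implicit Arguments.
Unset Strict Implicit.
Unset Printing Implicit Defensive.
Import GRing.Theory numFieldTopology.Exports.
Local Open Scope classical_set_scope.
Local Open Scope ring_scope.
Local Open Scope quotient_scope.

Section Defs.
Variable R : realType.

(* I_G(R^n, R^m): linear isometric isomorphisms R^n -> R^m, i.e. the
   m x n real matrices M (acting on column vectors) with M^T M = 1 and
   M M^T = 1; topologized as a subspace of the matrices. *)
Definition isom_set (m n : nat) : set 'M[R]_(m, n) :=
  [set M | M^T *m M = 1%:M /\ M *m M^T = 1%:M].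

Arguments isom_set : clear implicits.
Definition IHom (m n : nat) : Type := set_type (isom_set m n).
HB.instance Definition _ m n := Topological.copy (IHom m n) (isom_set m n : topologicalType).

Lemma isom_set_mul m n k (f : IHom m n) (g : IHom n k) :
  (val f *m val g) \in isom_set m k.
Proof.
case: f g => [f /set_mem [f1 f2]] [g /set_mem [g1 g2]] /=.
apply/mem_set; split.
- by rewrite trmx_mul mulmxA -(mulmxA _ f^T) f1 mulmx1 g1.
- by rewrite trmx_mul mulmxA -(mulmxA f) g2 mulmx1 f2.
Qed.

Lemma isom_set_id n : (1%:M : 'M[R]_n) \in isom_set n n.
Proof. by apply/mem_set; split; rewrite trmx1 mulmx1. Qed.

Definition hcomp m n k (f : IHom m n) (g : IHom n k) : IHom m k :=
  exist (fun M => M \in isom_set m k) _ (isom_set_mul f g).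
Definition hid n : IHom n n := exist (fun M => M \in isom_set n n) _ (isom_set_id n).

(* An I-space: a continuous functor X from I (objects R^n, morphisms the
   linear isometric isomorphisms, i.e. the groups O(n)) to based spaces. *)
Record Ispace := {
  Xsp : nat -> topologicalType;
  Xpt : forall n, Xsp n;
  Xmap : forall n, IHom n n -> Xsp n -> Xsp n
}.

Definition is_Ispace (X : Ispace) : Prop :=
  [/\ forall n (x : Xsp X n), Xmap (hid n) x = x,
      forall n (s t : IHom n n) (x : Xsp X n),
        Xmap (hcomp s t) x = Xmap s (Xmap t x),
      forall n (t : IHom n n), Xmap t (Xpt X n) = Xpt X n &
      forall n, continuous (fun p : IHom n n * Xsp X n => Xmap p.1 p.2)].

Definition is_rep (gT : finGroupType) n (rho : gT -> IHom n n) : Prop :=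
  forall g h : gT, val (rho (g * h)%g) = val (rho g) *m val (rho h).

(* Objects of I_G are pairs (n, rho) with rho a
   representation; A gives for each finite group gT and object (n,rho) a
   based gT-space (carrier A gT n rho, basepoint pt, action act), and
   map gives the functor on morphisms I_G((n,rho),(m,sigma)) = IHom m n.
   phi gives the natural isomorphisms phi_alpha : alpha^* A_H => A_G alpha^*
   (alpha^* (n,rho) = (n, rho o alpha), alpha^* f = f). *)
Definition is_IGspace
  (A : forall (gT : finGroupType) n, (gT -> IHom n n) -> topologicalType)
  (pt : forall (gT : finGroupType) n (rho : gT -> IHom n n), A gT n rho)
  (act : forall (gT : finGroupType) n (rho : gT -> IHom n n), gT -> A gT n rho -> A gT n rho)
  (map : forall (gT : finGroupType) n (rho : gT -> IHom n n) m (sigma : gT -> IHom m m),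
           IHom m n -> A gT n rho -> A gT m sigma)
  (phi : forall (gT hT : finGroupType) (alpha : gT -> hT) n (rho : hT -> IHom n n),
           A hT n rho -> A gT n (fun g => rho (alpha g))) : Prop :=
  (forall (gT : finGroupType) n (rho : gT -> IHom n n), is_rep rho ->
     [/\ forall g : gT, continuous (act gT n rho g),
         forall g : gT, act gT n rho g (pt gT n rho) = pt gT n rho,
         forall x, act gT n rho 1%g x = x &
         forall (g h : gT) x,
           act gT n rho (g * h)%g x = act gT n rho g (act gT n rho h x)]) /\
  (forall (gT : finGroupType) n (rho : gT -> IHom n n), is_rep rho ->
     [/\ forall x, map gT n rho n rho (hid n) x = x,
         forall m (sigma : gT -> IHom m m) (f : IHom m n),
           is_rep sigma -> map gT n rho m sigma f (pt gT n rho) = pt gT m sigma,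
         forall m (sigma : gT -> IHom m m), is_rep sigma ->
           continuous (fun p : IHom m n * A gT n rho => map gT n rho m sigma p.1 p.2) &
         forall m (sigma : gT -> IHom m m) k (tau : gT -> IHom k k)
                (f : IHom k m) (f' : IHom m n) x,
           is_rep sigma -> is_rep tau ->
           map gT n rho k tau (hcomp f f') x =
           map gT m sigma k tau f (map gT n rho m sigma f' x)]) /\
  (forall (gT : finGroupType) n (rho : gT -> IHom n n) m (sigma : gT -> IHom m m)
          (f : IHom m n) (g : gT) x,
     is_rep rho -> is_rep sigma ->
     map gT n rho m sigma (hcomp (sigma g) (hcomp f (rho g^-1%g))) x =
     act gT m sigma g (map gT n rho m sigma f (act gT n rho g^-1%g x))) /\
  (forall (gT hT : finGroupType) (alpha : gT -> hT),
     {morph alpha : x y / (x * y)%g} ->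
     forall n (rho : hT -> IHom n n), is_rep rho ->
     [/\ (* isomorphism in Top_G: based homeomorphism *)
         continuous (phi gT hT alpha n rho),
         phi gT hT alpha n rho (pt hT n rho) = pt gT n (fun g => rho (alpha g)),
         (exists psi : A gT n (fun g => rho (alpha g)) -> A hT n rho,
            [/\ continuous psi, cancel (phi gT hT alpha n rho) psi &
                cancel psi (phi gT hT alpha n rho)]),
         (* G-equivariance, G acting on A_H(V) through alpha *)
         forall (g : gT) x,
           phi gT hT alpha n rho (act hT n rho (alpha g) x) =
           act gT n (fun g => rho (alpha g)) g (phi gT hT alpha n rho x) &
         forall m (sigma : hT -> IHom m m) (f : IHom m n) x, is_rep sigma ->
           phi gT hT alpha m sigma (map hT n rho m sigma f x) =
           map gT n (fun g => rho (alpha g)) m (fun g => sigma (alpha g)) f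
               (phi gT hT alpha n rho x)]) /\
  (forall (gT : finGroupType) n (rho : gT -> IHom n n) x, is_rep rho ->
     phi gT gT (fun g => g) n rho x = x) /\
  (forall (gT hT kT : finGroupType) (alpha : gT -> hT) (beta : hT -> kT),
     {morph alpha : x y / (x * y)%g} -> {morph beta : x y / (x * y)%g} ->
     forall n (rho : kT -> IHom n n) x, is_rep rho ->
       phi gT kT (fun g => beta (alpha g)) n rho x =
       phi gT hT alpha n (fun h => rho (beta h)) (phi hT kT beta n rho x)).

(* The left Kan extension E_G X along iota : I -> I_G, explicitly:
   E_G X(V) = (coprod_n I_G(R^n, V) x X(R^n)) / ~ ,  [s t, x] ~ [s, t_* x]. *)
Section Kan.
Variable X : Ispace.

Definition Epre (m : nat) : topologicalType := {n : nat & (IHom m n * Xsp X n)%type}.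

Definition Erel m (a b : Epre m) : Prop :=
  exists n (s : IHom m n) (t : IHom n n) (x : Xsp X n),
    a = existT _ n (hcomp s t, x) /\ b = existT _ n (s, Xmap t x).

Definition Eeq m (a b : Epre m) : bool := `[< clos_refl_sym_trans _ (@Erel m) a b >].

Lemma Eeq_refl m : reflexive (@Eeq m).
Proof. by move=> a; apply/asboolP; exact: rst_refl. Qed.
Lemma Eeq_sym m : symmetric (@Eeq m).
Proof.
move=> a b; apply/idP/idP => /asboolP H; apply/asboolP; exact: rst_sym.
Qed.
Lemma Eeq_trans m : transitive (@Eeq m).
Proof.
move=> b a c /asboolP H1 /asboolP H2; apply/asboolP; exact: rst_trans H1 H2.
Qed.

Definition Eequiv m := EquivRel (@Eeq m) (@Eeq_refl m) (@Eeq_sym m) (@Eeq_trans m).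

Definition EGX (m : nat) : Type := {eq_quot (Eequiv m)}.
HB.instance Definition _ m := Quotient.on (EGX m).
HB.instance Definition _ m := Topological.copy (EGX m) (quotient_topology (EGX m)).

Definition EGpt m : EGX m := \pi_(EGX m) (existT _ m (hid m, Xpt X m)).

Definition EGmap m m' (f : IHom m' m) (q : EGX m) : EGX m' :=
  let: existT n (s, x) := repr q in \pi_(EGX m') (existT _ n (hcomp f s, x)).

Definition EGact (gT : finGroupType) m (rho : gT -> IHom m m) (g : gT) : EGX m -> EGX m :=
  EGmap (rho g).
End Kan.
End Defs.

(* Since I(R^m, R^n) is empty unless m = n, every class [s, x] in E_G X(R^m)
   with s : R^m -> R^m is equal to [id, X(s) x], so [id, -] is a homeomorphism
   X(R^m) ~ E_G X(R^m) under which E_G X(f) becomes X(f).  Neither the space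
   E_G X(V) nor E_G X(f) depends on the representation on V, only the action
   g [s, x] = [rho(g) s, x] does; hence all the structure maps phi_alpha can be
   taken to be identities, and every axiom of an I_G-space reduces to
   functoriality, pointedness and continuity of X. *)
From HB Require Import structures.
From mathcomp Require Import all_boot all_algebra all_fingroup generic_quotient.
From mathcomp Require Import boolp classical_sets reals topology unstable.
From Stdlib Require Import Relations.Relation_Operators.
Set Implicit Arguments.
Unset Strict Implicit.
Unset Printing Implicit Defensive.
Import GRing.Theory.
Local Open Scope ring_scope.
Local Open Scope quotient_scope.

Lemma continuous_pairl (A B : topologicalType) (a : A) :
  continuous (fun y : B => (a, y)).
Proof. by move=> y; apply: cvg_pair; [exact: cvg_cst | exact: cvg_id]. Qed.

Section Isometries.
Variable R : realType.

Lemma IHom_inj m n (f g : IHom R m n) : val f = val g -> f = g.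
Proof.
case: f g => [f Hf] [g Hg] /= E; subst g; congr exist; exact: Prop_irrelevance.
Qed.

Lemma hcomp1h m n (f : IHom R m n) : hcomp (hid R m) f = f.
Proof. by apply: IHom_inj => /=; rewrite mul1mx. Qed.

Lemma IHom_dim m n (f : IHom R m n) : m = n.
Proof.
case: f => [M /set_mem [MtM MMt]]; apply/eqP; rewrite eqn_leq.
have := mxrankM_maxl M M^T; rewrite MMt mxrank1 => /leq_trans -> //=;
  last exact: rank_leq_col.
have := mxrankM_maxl M^T M; rewrite MtM mxrank1 => /leq_trans -> //.
exact: rank_leq_col.
Qed.

Lemma is_rep1 (gT : finGroupType) n (rho : gT -> IHom R n n) :
  is_rep rho -> rho 1%g = hid R n.
Proof.
move=> rho_rep; apply: IHom_inj => /=.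
have := rho_rep 1%g 1%g; rewrite mulg1.
case: (rho 1%g) => [M /set_mem [MtM _]] /= MM.
by rewrite -[LHS]mul1mx -MtM -mulmxA -MM MtM.
Qed.

End Isometries.

Section KanExtension.
Variables (R : realType) (X : Ispace R).
Hypothesis X_Ispace : is_Ispace X.

Lemma Xmap1 n (x : Xsp X n) : Xmap (hid R n) x = x.
Proof. by case: X_Ispace. Qed.

Lemma XmapM n (s t : IHom R n n) (x : Xsp X n) :
  Xmap (hcomp s t) x = Xmap s (Xmap t x).
Proof. by case: X_Ispace. Qed.

(* [Xmap s x] for [s : IHom m k], transported along the equality [m = k]. *)
Definition Xeval m k (p : IHom R m k * Xsp X k) : Xsp X m :=
  (match IHom_dim p.1 in _ = k' return IHom R m k' -> Xsp X k' -> Xsp X m with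
   | erefl => fun s x => Xmap s x end) p.1 p.2.

Lemma XevalE m (p : IHom R m m * Xsp X m) : Xeval p = Xmap p.1 p.2.
Proof. by rewrite /Xeval; move: (IHom_dim _) => e; rewrite (eq_irrelevance e erefl). Qed.

Lemma Xeval_continuous m k : continuous (@Xeval m k).
Proof.
have [<-|neq_mk] := eqVneq m k; last first.
  by move=> p; exfalso; move/eqP: neq_mk; apply; exact: IHom_dim p.1.
rewrite (_ : @Xeval m m = fun p => Xmap p.1 p.2); first by case: X_Ispace.
by apply: funext => p; exact: XevalE.
Qed.

Definition Epre_eval m : Epre X m -> Xsp X m := sigT_fun (@Xeval m).

Lemma Epre_eval_continuous m : continuous (@Epre_eval m).
Proof. by apply: sigT_continuous => k; exact: Xeval_continuous. Qed.

Lemma Epre_evalM m n (f : IHom R m m) (s : IHom R m n) x :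
  Epre_eval (existT _ n (hcomp f s, x)) = Xmap f (Epre_eval (existT _ n (s, x))).
Proof.
have e := IHom_dim s; subst n.
by rewrite /Epre_eval /sigT_fun /= !XevalE XmapM.
Qed.

Lemma Epre_eval_Eeq m (a b : Epre X m) : Eeq a b -> Epre_eval a = Epre_eval b.
Proof.
move=> /asboolP; elim=> {a b} [a b [n [s [t [x [-> ->]]]]]| // | a b _ -> //|].
- have e := IHom_dim s; subst n.
  by rewrite /Epre_eval /sigT_fun /= !XevalE XmapM.
- by move=> a b c _ -> _ ->.
Qed.

Definition X_of_EGX m (q : EGX X m) : Xsp X m := Epre_eval (repr q).

Definition EGX_of_X m (x : Xsp X m) : EGX X m :=
  \pi_(EGX X m) (existT _ m (hid R m, x)).

Lemma X_of_EGX_pi m (a : Epre X m) : X_of_EGX (\pi_(EGX X m) a) = Epre_eval a.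
Proof.
have /eqmodP repr_pi : \pi_(EGX X m) (repr (\pi_(EGX X m) a)) = \pi_(EGX X m) a.
  by rewrite reprK.
exact: Epre_eval_Eeq repr_pi.
Qed.

(* The single relation [s, x] ~ [id, X(s) x] identifies every class. *)
Lemma pi_Epre m (a : Epre X m) : \pi_(EGX X m) a = EGX_of_X (Epre_eval a).
Proof.
case: a => n [s x]; have e := IHom_dim s; subst n.
rewrite /Epre_eval /sigT_fun /= XevalE /EGX_of_X; apply/eqmodP/asboolP/rst_step.
by exists m, (hid R m), s, x; rewrite hcomp1h.
Qed.

Lemma EGX_of_XK m : cancel (@EGX_of_X m) (@X_of_EGX m).
Proof.
by move=> x; rewrite X_of_EGX_pi /Epre_eval /sigT_fun /= XevalE Xmap1.
Qed.

Lemma X_of_EGXK m : cancel (@X_of_EGX m) (@EGX_of_X m).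
Proof. by move=> q; rewrite -[in RHS](reprK q) pi_Epre. Qed.

Lemma X_of_EGX_continuous m : continuous (@X_of_EGX m).
Proof.
apply: repr_comp_continuous; first exact: Epre_eval_continuous.
by move=> a b /eqP ab; rewrite -!X_of_EGX_pi ab.
Qed.

Lemma EGX_of_X_continuous m : continuous (@EGX_of_X m).
Proof.
move=> x.
have pair_x : {for x, continuous (fun x : Xsp X m => (hid R m, x))}.
  exact: continuous_pairl.
have sum_x : {for (hid R m, x),
    continuous (existT (fun k => (IHom R m k * Xsp X k)%type) m)}.
  exact: existT_continuous.
have pi_x := @pi_continuous _ (EGX X m) (existT _ m (hid R m, x)).
exact: continuous_comp (continuous_comp pair_x sum_x) pi_x.
Qed.

Lemma EGmapE m (f : IHom R m m) (q : EGX X m) :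
  EGmap f q = EGX_of_X (Xmap f (X_of_EGX q)).
Proof.
by rewrite /EGmap /X_of_EGX; case: (repr q) => n [s x]; rewrite pi_Epre Epre_evalM.
Qed.

Lemma EGmap1 n (q : EGX X n) : EGmap (hid R n) q = q.
Proof. by rewrite EGmapE Xmap1 X_of_EGXK. Qed.

Lemma EGmapM m n k (f : IHom R k m) (g : IHom R m n) (q : EGX X n) :
  EGmap (hcomp f g) q = EGmap f (EGmap g q).
Proof.
have e := IHom_dim f; subst k; have e := IHom_dim g; subst n.
by rewrite !EGmapE EGX_of_XK XmapM.
Qed.

Lemma EGmap_pt m n (f : IHom R m n) : EGmap f (EGpt X n) = EGpt X m.
Proof.
have e := IHom_dim f; subst n.
by rewrite EGmapE [X_of_EGX _]EGX_of_XK; case: X_Ispace => _ _ -> _.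
Qed.

Lemma EGmap_continuous2 m n :
  continuous (fun p : IHom R m n * EGX X n => EGmap p.1 p.2).
Proof.
have [<-|neq_mn] := eqVneq m n; last first.
  by move=> p; exfalso; move/eqP: neq_mn; apply; exact: IHom_dim p.1.
rewrite (_ : (fun p => _) = fun p => EGX_of_X (Xmap p.1 (X_of_EGX p.2))); last first.
  by apply: funext => p; exact: EGmapE.
move=> p; apply: (@continuous_comp _ _ _ (fun p => Xmap p.1 (X_of_EGX p.2))
  (@EGX_of_X m)); last exact: EGX_of_X_continuous.
apply: (@continuous2_cvg _ _ _ _ _ _ fst (fun p => X_of_EGX p.2) (@Xmap R X m)).
- by case: X_Ispace => _ _ _ /(_ m (p.1, X_of_EGX p.2)).
- exact: cvg_fst.
- apply: (@continuous_comp _ _ _ snd (@X_of_EGX m)); first exact: cvg_snd.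
  exact: X_of_EGX_continuous.
Qed.

Lemma EGmap_continuous m n (f : IHom R m n) : continuous (EGmap (X:=X) f).
Proof.
move=> q; apply: (@continuous_comp _ _ _ (fun q => (f, q))
  (fun p : IHom R m n * EGX X n => EGmap p.1 p.2)); last exact: EGmap_continuous2.
exact: continuous_pairl.
Qed.

End KanExtension.

Theorem propositionB3 (R : realType) (X : Ispace R) :
  is_Ispace X ->
  exists phi : forall (gT hT : finGroupType) (alpha : gT -> hT) n
                      (rho : hT -> IHom R n n), EGX X n -> EGX X n,
    @is_IGspace R
      (fun (gT : finGroupType) n (rho : gT -> IHom R n n) => (EGX X n : topologicalType))
      (fun (gT : finGroupType) n (rho : gT -> IHom R n n) => @EGpt R X n)
      (fun (gT : finGroupType) n (rho : gT -> IHom R n n) (g : gT) =>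
         @EGact R X gT n rho g)
      (fun (gT : finGroupType) n (rho : gT -> IHom R n n) m
           (sigma : gT -> IHom R m m) (f : IHom R m n) => @EGmap R X n m f)
      phi.
Proof.
move=> X_Ispace; exists (fun _ _ _ _ _ x => x); rewrite /EGact.
split; [|split; [|split; [|split; [|split]]]] => //.
- move=> gT n rho rho_rep; split=> [g|g|x|g h x].
  + exact: EGmap_continuous.
  + exact: EGmap_pt.
  + by rewrite (is_rep1 rho_rep) EGmap1.
  + by rewrite -EGmapM //; congr EGmap; apply: IHom_inj; exact: rho_rep.
- move=> gT n rho _; split=> [x|m sigma f _|m sigma _|*].
  + exact: EGmap1.
  + exact: EGmap_pt.
  + exact: EGmap_continuous2.
  + by rewrite EGmapM.
- by move=> *; rewrite !EGmapM.
- move=> gT hT alpha _ n rho _; split=> //.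
  + by move=> x; exact: cvg_id.
  + exists id; split=> //; by move=> x; exact: cvg_id.
Qed.
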